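(* Let $G=(N,A)$ be a compressed $s$-$t$ DAG and let $u,v\in N$ be distinct nodes. If $u$ is the immediate $s$-dominator of $v$ and $v$ is the immediate $t$-dominator of $u$, then $u$ is the immediate $s$-dominator of some node different from $v$, and $v$ is the immediate $t$-dominator of some node different from $u$.
   Context: An $s$-$t$ DAG is a directed acyclic graph with a unique source $s$ and a unique sink $t$ such that every node is reachable from $s$ and every node reaches $t$. A unitary path is a path in which every node other than the first has indegree exactly one and every node other than the last has outdegree exactly one. The DAG is compressed if it has no unitary path with two or more nodes (equivalently, no arc $xy$ such that $y$ is the only out-neighbour of $x$ and $x$ is the only in-neighbour of $y$). A node $a$ $s$-dominates $b$ if every $s$-$b$ path contains $a$ (strictly if $a\neq b$); $a$ $t$-dominates $b$ if every $b$-$t$ path contains $a$. For $b\neq s$, the immediate $s$-dominator of $b$ is the strict $s$-dominator of $b$ that is $s$-dominated by all strict $s$-dominators of $b$; immediate $t$-dominators are defined symmetrically. *)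

From mathcomp Require Import all_boot.
Set Implicit Arguments. Unset Strict Implicit. Unset Printing Implicit Defensive.

Section DAG.
Variables (T : finType) (e : rel T).

(* A walk/path from x to y: node sequence x :: p, consecutive nodes joined by arcs,
   ending in y.  The nodes it contains are those of x :: p. *)
Definition is_walk (x y : T) (p : seq T) : bool := path e x p && (last x p == y).

Definition indeg (y : T) : nat := #|[set x | e x y]|.
Definition outdeg (x : T) : nat := #|[set y | e x y]|.

Definition acyclic : Prop := forall x p, is_walk x x p -> p = [::].

Definition st_dag (s t : T) : Prop :=
  [/\ acyclic,
      (forall x, indeg x = 0 <-> x = s),
      (forall x, outdeg x = 0 <-> x = t),
      (forall x, exists p, is_walk s x p) &
      (forall x, exists p, is_walk x t p)].

Definition compressed : Prop :=
  forall x y, e x y -> ~ (outdeg x = 1 /\ indeg y = 1).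

Definition s_dom (s a b : T) : Prop :=
  forall p, is_walk s b p -> a \in s :: p.

Definition t_dom (t a b : T) : Prop :=
  forall p, is_walk b t p -> a \in b :: p.

Definition imm_s_dom (s a b : T) : Prop :=
  [/\ b <> s, a <> b, s_dom s a b &
      forall c, c <> b -> s_dom s c b -> s_dom s c a].

Definition imm_t_dom (t a b : T) : Prop :=
  [/\ b <> t, a <> b, t_dom t a b &
      forall c, c <> b -> t_dom t c b -> t_dom t c a].

End DAG.

From mathcomp Require Import all_boot.
Set Implicit Arguments. Unset Strict Implicit. Unset Printing Implicit Defensive.

(* If v were the only out-neighbour of u then, as u s-dominates v and the graph
   is acyclic, u would also be the only in-neighbour of v, which compression
   forbids; so u has an out-neighbour x <> v.  Since v t-dominates u, every
   x-t path passes through v, and an s-x path avoiding u followed by an x-v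
   path is an s-v path whose visit of u closes a cycle through the arc ux.
   Hence u s-dominates x, and an in-neighbour that s-dominates x is its
   immediate s-dominator.  The t-side is the s-side of the converse graph. *)

Section Walks.
Variables (T : finType) (e : rel T).

Lemma is_walk_cons x y z p : is_walk e x z (y :: p) = e x y && is_walk e y z p.
Proof. by rewrite /is_walk /= andbA. Qed.

Lemma is_walk_rcons x y z p : is_walk e x y p -> e y z -> is_walk e x z (rcons p z).
Proof.
by move=> /andP[P /eqP <-] exz; rewrite /is_walk rcons_path P exz last_rcons eqxx.
Qed.

Lemma is_walk_cat x y z p q :
  is_walk e x y p -> is_walk e y z q -> is_walk e x z (p ++ q).
Proof.
by move=> /andP[P /eqP <-] /andP[Q L]; rewrite /is_walk cat_path last_cat P Q L.
Qed.

Lemma is_walk_split x y z p : is_walk e x y p -> z \in x :: p ->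
  exists p1 p2, [/\ p = p1 ++ p2, is_walk e x z p1 & is_walk e z y p2].
Proof.
move=> /andP[P L] zp; move: P L; case/splitPl: zp => p1 p2 Ez.
rewrite cat_path last_cat -Ez => /andP[P1 P2] L.
by exists p1, p2; rewrite /is_walk P1 P2 L Ez eqxx.
Qed.

Lemma acyclic_walk_start_notin x y p : acyclic e -> is_walk e x y p -> x \notin p.
Proof.
move=> acy /andP[P _]; apply/negP => xp; move: P; case/path.splitP: xp => p1 p2.
rewrite cat_path => /andP[P1 _]; have := acy x (rcons p1 x).
by rewrite /is_walk P1 last_rcons eqxx => /(_ isT) /(congr1 size); rewrite size_rcons.
Qed.

Lemma card_set_eq1 (P : pred T) y :
  P y -> (forall z, P z -> z = y) -> #|[set z | P z]| = 1.
Proof.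
move=> Py Py_uniq; rewrite (_ : [set z | P z] = [set y]) ?cards1 //.
by apply/setP => z; rewrite !inE; apply/idP/eqP => [/Py_uniq | ->].
Qed.

Lemma s_dom_in_neighbour s a b y : s_dom e s a b -> a <> b -> e y b -> s_dom e s a y.
Proof.
move=> dom nab eyb p W; have := dom _ (is_walk_rcons W eyb).
by rewrite -rcons_cons mem_rcons in_cons => /predU1P[].
Qed.

Lemma s_dom_walk s a b p : s_dom e s a b -> is_walk e s b p -> exists q, is_walk e a b q.
Proof. by move=> dom W; have [p1 [p2 [_ _ W2]]] := is_walk_split W (dom _ W); exists p2. Qed.

End Walks.

Section Dominators.
Variables (T : finType) (e : rel T) (s t : T).
Hypothesis dag : st_dag e s t.

Lemma exists_out_neighbour x : x <> t -> exists y, e x y.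
Proof.
have [_ _ hout _ _] := dag; move=> xt.
have /card_gt0P[y] : 0 < outdeg e x by rewrite lt0n; apply/eqP => /hout.
by rewrite inE; exists y.
Qed.

Lemma imm_s_dom_in_neighbour a b : e a b -> s_dom e s a b -> imm_s_dom e s a b.
Proof.
have [acy hin _ _ _] := dag; move=> eab dom; split=> //.
- by move=> /hin /card0_eq /(_ a); rewrite !inE eab.
- move=> ab; subst a; have := acy b [:: b]; rewrite /is_walk /= eab eqxx.
  by move=> /(_ isT).
- by move=> c cb /s_dom_in_neighbour; apply.
Qed.

Variables (u v : T).
Hypotheses (comp : compressed e) (nuv : u <> v).
Hypotheses (suv : s_dom e s u v) (tvu : t_dom e t v u).

Lemma t_dominated_neq_sink : u <> t.
Proof.
move=> ut; have := @tvu [::]; rewrite /is_walk /= ut eqxx inE.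
by move=> /(_ isT) /eqP vt; apply: nuv; rewrite ut vt.
Qed.

Lemma sole_in_neighbour : (forall z, e u z -> z = v) -> forall y, e y v -> y = u.
Proof.
have [acy _ _ hfrom _] := dag; move=> succ y eyv.
have [p Wsy] := hfrom y.
have [[|z q]] := s_dom_walk (s_dom_in_neighbour suv nuv eyv) Wsy.
  by move=> /andP[_ /eqP].
rewrite is_walk_cons => /andP[/succ -> Wvy].
by have := acy _ _ (is_walk_rcons Wvy eyv); case: q {Wvy}.
Qed.

Lemma out_neighbour_neq : exists2 x, e u x & x != v.
Proof.
case: (boolP [exists y, e u y && (y != v)]) => [/existsP[y /andP[]] | /existsPn none].
  by exists y.
have succ z : e u z -> z = v.
  by move=> euz; apply/eqP; move: (none z); rewrite euz /= negbK.
have [x eux] := exists_out_neighbour t_dominated_neq_sink.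
have euv : e u v by rewrite -(succ x eux).
exfalso; apply: (comp euv).
split; first exact: card_set_eq1 euv succ.
exact: (card_set_eq1 (P := fun x => e x v) euv (sole_in_neighbour succ)).
Qed.

Lemma s_dom_out_neighbour x : e u x -> s_dom e s u x.
Proof.
have [acy _ _ _ hto] := dag; move=> eux q Wsx; apply/negPn/negP => unq.
have [r Wxt] := hto x.
have Wut : is_walk e u t (x :: r) by rewrite is_walk_cons eux.
have vr : v \in x :: r by move: (tvu Wut); rewrite in_cons => /predU1P[/esym|].
have [r1 [r2 [Er Wxv _]]] := is_walk_split Wxt vr.
have := suv (is_walk_cat Wsx Wxv); rewrite -cat_cons mem_cat (negbTE unq) /= => ur1.
by have := acyclic_walk_start_notin acy Wut; rewrite Er in_cons mem_cat ur1 orbT.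
Qed.

Lemma imm_s_dom_other : exists w, w <> v /\ imm_s_dom e s u w.
Proof.
have [x eux /eqP xv] := out_neighbour_neq.
by exists x; split; last exact/imm_s_dom_in_neighbour/s_dom_out_neighbour.
Qed.

End Dominators.

Section Converse.
Variable T : finType.

Definition converse (e : rel T) : rel T := fun x y => e y x.

Lemma is_walk_converse e x y p : is_walk e x y p ->
  is_walk (converse e) y x (rev (belast x p)) /\ y :: rev (belast x p) =i x :: p.
Proof.
move=> /andP[P /eqP <-]; split.
  rewrite /is_walk (rev_path (converse e)) P /=.
  by case: p {P} => [|z p] //=; rewrite rev_cons last_rcons.
by move=> z; rewrite in_cons mem_rev lastI mem_rcons in_cons orbC.
Qed.

Lemma t_dom_converse e t a b : t_dom e t a b <-> s_dom (converse e) t a b.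
Proof.
by split=> dom p /is_walk_converse[W' M]; rewrite -M; apply: dom W'.
Qed.

Lemma s_dom_converse e s a b : s_dom e s a b <-> t_dom (converse e) s a b.
Proof. exact: iff_sym (t_dom_converse (converse e) s a b). Qed.

Lemma imm_t_dom_converse e t a b : imm_t_dom e t a b <-> imm_s_dom (converse e) t a b.
Proof.
by split=> -[bt ab /t_dom_converse dom imm]; split=> // c cb
  /t_dom_converse /(imm c cb) /t_dom_converse.
Qed.

Lemma st_dag_converse e s t : st_dag e s t -> st_dag (converse e) t s.
Proof.
move=> [acy hin hout hfrom hto]; split=> // [x p | x | x].
- move=> /is_walk_converse[/acy /(congr1 size) + _].
  by rewrite size_rev size_belast; case: p.
- by have [p /is_walk_converse[W _]] := hto x; exists (rev (belast x p)).
- by have [p /is_walk_converse[W _]] := hfrom x; exists (rev (belast s p)).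
Qed.

Lemma compressed_converse e : compressed e -> compressed (converse e).
Proof. by move=> comp x y exy [? ?]; apply: (comp y x). Qed.

End Converse.

Theorem lemma4 (T : finType) (e : rel T) (s t u v : T) :
  st_dag e s t -> compressed e -> u <> v ->
  imm_s_dom e s u v -> imm_t_dom e t v u ->
  (exists w, w <> v /\ imm_s_dom e s u w) /\
  (exists w, w <> u /\ imm_t_dom e t v w).
Proof.
move=> dag comp nuv [_ _ suv _] [_ _ tvu _].
split; first exact: (imm_s_dom_other dag comp nuv suv tvu).
have [w [wu /imm_t_dom_converse imm]] :=
  imm_s_dom_other (st_dag_converse dag) (compressed_converse comp) (nesym nuv)
    (proj1 (t_dom_converse e t v u) tvu) (proj1 (s_dom_converse e s u v) suv).
by exists w.
Qed.
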